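(* Let $G$ be a LEF-group, $R$ a ring, $A$ an $R$-module, and $\sigma,\tau\in CA_{R\text{-mod}}(G,A)$. (1) If $A$ is a Noetherian $R$-module and $\tau$ is reversible, then $\tau^{-1}\in CA_{R\text{-mod}}(G,A)$. (2) If $\sigma\circ\tau=\mathrm{Id}$, then $\tau\circ\sigma=\mathrm{Id}$ in each of the following cases: (a) $A$ is a Noetherian $R$-module or an Artinian $R$-module; (b) $R$ is commutative and $A$ is a finitely generated $R$-module.
   Context: A group $G$ is LEF if every finite subset $S\subset G$ admits an injective map $\varphi\colon S\to H$ into some finite group $H$ with $\varphi(ab)=\varphi(a)\varphi(b)$ whenever $a,b,ab\in S$. $G$ acts on $A^G$ by $(gc)(h)=c(g^{-1}h)$; a cellular automaton is a map $\tau\colon A^G\to A^G$ with $(\tau(c))(g)=\mu((g^{-1}c)|_M)$ for some finite $M\subset G$ and map $\mu\colon A^M\to A$; it is reversible if it is bijective and its inverse is a cellular automaton. $CA_{R\text{-mod}}(G,A)$ is the set of cellular automata $\tau\colon A^G\to A^G$ admitting, for some finite memory set $M\subset G$, a local defining map $\mu\colon A^M\to A$ which is a homomorphism of $R$-modules. *)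

From HB Require Import structures.
From Stdlib Require List.
From mathcomp Require Import all_boot all_order all_algebra fingroup.
Set Implicit Arguments. Unset Strict Implicit. Unset Printing Implicit Defensive.
Import GRing.Theory.
Local Open Scope ring_scope.

Record Grp := MkGrp {
  gcar :> Type;
  gmul : gcar -> gcar -> gcar;
  gone : gcar;
  ginv : gcar -> gcar;
  gmulA : forall x y z, gmul x (gmul y z) = gmul (gmul x y) z;
  gmul1l : forall x, gmul gone x = x;
  gmulVl : forall x, gmul (ginv x) x = gone
}.

Definition LEF (G : Grp) : Prop :=
  forall S : list G, exists (H : finGroupType) (phi : G -> H),
    (forall a b, List.In a S -> List.In b S -> phi a = phi b -> a = b) /\
    (forall a b, List.In a S -> List.In b S -> List.In (gmul a b) S ->
       phi (gmul a b) = (phi a * phi b)%g).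

Definition gact (G : Grp) (A : Type) (g : G) (c : G -> A) : G -> A :=
  fun h => c (gmul (ginv g) h).

(* tau is a cellular automaton with finite memory set M = {m 0, ..., m (n-1)}
   (m injective) and local defining map mu : A^M -> A. *)
Definition is_CA_with (G : Grp) (A : Type) (n : nat) (m : 'I_n -> G)
    (mu : {ffun 'I_n -> A} -> A) (tau : (G -> A) -> (G -> A)) : Prop :=
  injective m /\
  forall c g, tau c g = mu [ffun i => gact (ginv g) c (m i)].

Definition is_CA (G : Grp) (A : Type) (tau : (G -> A) -> (G -> A)) : Prop :=
  exists n (m : 'I_n -> G) (mu : {ffun 'I_n -> A} -> A), is_CA_with m mu tau.

Definition reversible (G : Grp) (A : Type) (tau : (G -> A) -> (G -> A)) : Prop :=
  exists tau', cancel tau tau' /\ cancel tau' tau /\ is_CA tau'.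

Definition Rmod_hom (R : pzRingType) (A : lmodType R) (n : nat)
    (mu : {ffun 'I_n -> A} -> A) : Prop :=
  (forall x y, mu (x + y) = mu x + mu y) /\
  (forall (r : R) x, mu (r *: x) = r *: mu x).

Definition CA_Rmod (G : Grp) (R : pzRingType) (A : lmodType R)
    (tau : (G -> A) -> (G -> A)) : Prop :=
  exists n (m : 'I_n -> G) (mu : {ffun 'I_n -> A} -> A),
    is_CA_with m mu tau /\ Rmod_hom mu.

Definition submodule (R : pzRingType) (A : lmodType R) (N : A -> Prop) : Prop :=
  N 0 /\ (forall x y, N x -> N y -> N (x + y)) /\
  (forall (r : R) x, N x -> N (r *: x)).

Definition noetherian_module (R : pzRingType) (A : lmodType R) : Prop :=
  forall N : nat -> A -> Prop,
    (forall k, submodule (N k)) ->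
    (forall k x, N k x -> N k.+1 x) ->
    exists k0, forall k, (k0 <= k)%N -> forall x, N k x <-> N k0 x.

Definition artinian_module (R : pzRingType) (A : lmodType R) : Prop :=
  forall N : nat -> A -> Prop,
    (forall k, submodule (N k)) ->
    (forall k x, N k.+1 x -> N k x) ->
    exists k0, forall k, (k0 <= k)%N -> forall x, N k x <-> N k0 x.

Definition fin_gen_module (R : pzRingType) (A : lmodType R) : Prop :=
  exists s : seq A, forall x : A,
    exists c : 'I_(size s) -> R, x = \sum_(i < size s) c i *: s`_i.

(* The LEF property lets the two automata be simulated on a finite group:
   an almost-homomorphism [phi : G -> H] that is exact on a finite window
   around the memory sets turns [sigma] and [tau] into linear cellular
   automata [sH], [tH] on the module [A^H] with [sH \o tH = id], and every
   configuration on the window is pulled back from one on [H].  The module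
   [A^H] is again Noetherian, Artinian, or finitely generated over a
   commutative ring, so a one-sided inverse of a linear endomorphism of it is
   two-sided: a surjective endomorphism of a Noetherian module is injective
   (the kernels of its iterates stabilise), an injective endomorphism of an
   Artinian module is surjective (their images stabilise), and over a
   commutative ring a surjective endomorphism of a finitely generated module
   is injective (Vasconcelos, via Cayley-Hamilton).  Hence [tH \o sH = id],
   which pulls back to [tau \o sigma = id].  For (1), the inverse of a linear
   bijection is linear, so the local rule of the cellular inverse is linear. *)

From Stdlib Require List.
From Stdlib Require Import FunctionalExtensionality ClassicalEpsilon.
From HB Require Import structures.
From mathcomp Require Import all_boot all_order all_algebra fingroup.

Set Implicit Arguments.
Unset Strict Implicit.
Unset Printing Implicit Defensive.

Import GRing.Theory.
Local Open Scope ring_scope.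

Section GroupLaws.
Variable G : Grp.
Implicit Types x y : G.

Lemma gmulVr x : gmul x (ginv x) = gone G.
Proof.
rewrite -[LHS]gmul1l -(gmulVl (ginv x)) -gmulA [gmul (ginv x) _]gmulA.
by rewrite gmulVl gmul1l gmulVl.
Qed.

Lemma gmul1r x : gmul x (gone G) = x.
Proof. by rewrite -(gmulVl x) gmulA gmulVr gmul1l. Qed.

Lemma ginvK x : ginv (ginv x) = x.
Proof. by rewrite -[LHS]gmul1r -(gmulVl x) gmulA gmulVl gmul1l. Qed.

End GroupLaws.

Lemma factor_through (T U V : Type) (m : T -> U) (x : T -> V) (v0 : V) :
  (forall s t, m s = m t -> x s = x t) -> exists c : U -> V, forall t, c (m t) = x t.
Proof.
move=> compat; exists (fun u => match excluded_middle_informative (exists t, m t = u) with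
  | left ex => x (proj1_sig (constructive_indefinite_description _ ex))
  | right _ => v0 end) => t.
case: excluded_middle_informative => [ex | []]; last by exists t.
by case: constructive_indefinite_description => s /= /compat.
Qed.

Section LinearMaps.
Variable R : pzRingType.

Definition lmod_morphism (U V : lmodType R) (f : U -> V) : Prop :=
  (forall x y, f (x + y) = f x + f y) /\ (forall (r : R) x, f (r *: x) = r *: f x).

Variables (U V : lmodType R) (f : U -> V).
Hypothesis f_lin : lmod_morphism f.

Lemma lmod_morphism0 : f 0 = 0.
Proof. by apply: (addrI (f 0)); rewrite -f_lin.1 !addr0. Qed.

Lemma lmod_morphismB x y : f (x - y) = f x - f y.
Proof. by rewrite -scaleN1r f_lin.1 f_lin.2 scaleN1r. Qed.

Lemma lmod_morphism_sum (I : Type) (r : seq I) (F : I -> U) :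
  f (\sum_(i <- r) F i) = \sum_(i <- r) f (F i).
Proof. exact: (big_morph f f_lin.1 lmod_morphism0). Qed.

Lemma lmod_morphism_inj : (forall x, f x = 0 -> x = 0) -> injective f.
Proof.
move=> ker x y fxy; apply/eqP; rewrite -subr_eq0; apply/eqP/ker.
by rewrite lmod_morphismB fxy subrr.
Qed.

End LinearMaps.

Lemma lmod_morphism_iter (R : pzRingType) (U : lmodType R) (f : U -> U) k :
  lmod_morphism f -> lmod_morphism (iter k f).
Proof.
move=> [fD fZ]; elim: k => [|k [itD itZ]]; first by [].
by split=> [x y | r x] /=; rewrite ?itD ?itZ ?fD ?fZ.
Qed.

Section ChainConditions.
Variables (R : pzRingType) (up : bool).

Definition monotone_chain (T : Type) (N : nat -> T -> Prop) : Prop :=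
  forall k x, if up then N k x -> N k.+1 x else N k.+1 x -> N k x.

Definition stationary (T : Type) (N : nat -> T -> Prop) : Prop :=
  exists k0, forall k, (k0 <= k)%N -> forall x, N k x <-> N k0 x.

(* [up] selects the ascending chain condition, [~~ up] the descending one. *)
Definition chain_condition (M : lmodType R) (S : M -> Prop) : Prop :=
  forall N : nat -> M -> Prop, (forall k, submodule (N k)) ->
    (forall k x, N k x -> S x) -> monotone_chain N -> stationary N.

Lemma monotone_chain_le (T : Type) (N : nat -> T -> Prop) k k' :
  monotone_chain N -> (k <= k')%N ->
  forall x, N (if up then k else k') x -> N (if up then k' else k) x.
Proof.
rewrite /monotone_chain; move=> mN /subnK <-; elim: (k' - k)%N => [|d IH] x //.
by case: up mN IH => /= mN IH; [move/IH/mN | move/mN/IH].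
Qed.

Lemma stationary_eq (T : Type) (N : nat -> T -> Prop) k0 :
  (forall k, (k0 <= k)%N -> forall x, N k x <-> N k0 x) ->
  forall k k', (k0 <= k)%N -> (k0 <= k')%N -> forall x, N k x <-> N k' x.
Proof. by move=> st k k' hk hk' x; rewrite (st k hk) (st k' hk'). Qed.

Lemma chain_condition_sub (M : lmodType R) (S S' : M -> Prop) :
  chain_condition S' -> (forall x, S x -> S' x) -> chain_condition S.
Proof. by move=> cc SS' N sN NS; apply: cc => // k x /NS /SS'. Qed.

Lemma chain_condition0 (M : lmodType R) : chain_condition (fun x : M => x = 0).
Proof.
move=> N sN N0 _; exists 0%N => k _ x.
by split=> /[dup] Nx /N0 ->; [exact: (sN 0%N).1 | exact: (sN k).1].
Qed.

Lemma submoduleB (M : lmodType R) (N : M -> Prop) x y :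
  submodule N -> N x -> N y -> N (x - y).
Proof. by case=> _ [ND NZ] Nx Ny; rewrite -scaleN1r; apply/ND/NZ. Qed.

Lemma submodule_eq_proj (M : lmodType R) (V : zmodType) (pi : M -> V)
    (N N' : M -> Prop) :
  (forall x y, pi (x - y) = pi x - pi y) -> submodule N -> submodule N' ->
  (forall x, N x -> N' x) -> (forall x, N' x -> exists2 y, N y & pi y = pi x) ->
  (forall x, N' x -> pi x = 0 -> N x) -> forall x, N' x -> N x.
Proof.
move=> piB sN sN' NN' img ker x N'x; have [y Ny pyx] := img x N'x.
have Nxy : N (x - y).
  by apply: ker; [exact: submoduleB sN' N'x (NN' _ Ny) | rewrite piB pyx subrr].
by rewrite -(subrK y x); apply: sN.2.1.
Qed.

Lemma chain_condition_proj (M A : lmodType R) (pi : M -> A) (S : M -> Prop) :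
  lmod_morphism pi -> chain_condition (fun _ : A => True) ->
  chain_condition (fun x => S x /\ pi x = 0) -> chain_condition S.
Proof.
move=> pi_lin ccA ccK N sN NS mN.
pose P k a := exists2 x, N k x & pi x = a.
pose K k x := N k x /\ pi x = 0.
have [|//||k1 stP] := ccA P.
- move=> k; have [N0 [ND NZ]] := sN k; split; first by exists 0; rewrite ?lmod_morphism0.
  split=> [a b [x Nx <-] [y Ny <-] | r a [x Nx <-]].
    by exists (x + y); [apply: ND | rewrite pi_lin.1].
  by exists (r *: x); [apply: NZ | rewrite pi_lin.2].
- by move=> k a; case: up (mN k) => mNk [x Nx <-]; exists x => //; apply: mNk.
have [|||k2 stK] := ccK K.
- move=> k; have [N0 [ND NZ]] := sN k; split; first by split; rewrite ?lmod_morphism0.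
  split=> [x y [Nx px] [Ny py] | r x [Nx px]]; split; rewrite ?pi_lin.1 ?pi_lin.2.
  + exact: ND.
  + by rewrite px py addr0.
  + exact: NZ.
  + by rewrite px scaler0.
- by move=> k x [Nx px]; split; [apply: NS Nx | ].
- by move=> k x; case: up (mN k) => mNk [Nx px]; split => //; apply: mNk.
exists (maxn k1 k2) => k hk.
set lo := if up then maxn k1 k2 else k; set hi := if up then k else maxn k1 k2.
have lohi : forall x, N lo x -> N hi x by apply: monotone_chain_le.
have /andP[lo1 lo2] : (k1 <= lo)%N && (k2 <= lo)%N by rewrite -geq_max /lo; case: up.
have /andP[hi1 hi2] : (k1 <= hi)%N && (k2 <= hi)%N by rewrite -geq_max /hi; case: up.
have hilo : forall x, N hi x -> N lo x.
  apply: (submodule_eq_proj (lmod_morphismB pi_lin) (sN lo) (sN hi) lohi).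
    by move=> x Nx; apply/(stationary_eq stP hi1 lo1); exists x.
  by move=> x Nx px; have [] : K lo x by apply/(stationary_eq stK hi2 lo2).
move=> x; rewrite /lo /hi in lohi hilo.
by case: up lohi hilo => lohi hilo; split; by [move/hilo | move/lohi].
Qed.

End ChainConditions.

Lemma chain_condition_ffun (R : pzRingType) (up : bool) (A : lmodType R)
    (H : finType) :
  chain_condition up (fun _ : A => True) ->
  chain_condition up (fun _ : {ffun H -> A} => True).
Proof.
move=> ccA.
suff cc_supp (l : seq H) :
    chain_condition up (fun f : {ffun H -> A} => forall x, x \notin l -> f x = 0).
  by apply: (chain_condition_sub (cc_supp (enum H)) _) => f _ x; rewrite mem_enum.
elim: l => [|h l IH].
  apply: (chain_condition_sub (@chain_condition0 R up _) _) => f f0.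
  by apply/ffunP => x; rewrite ffunE f0.
apply: (chain_condition_proj (pi := fun f : {ffun H -> A} => f h)) ccA _.
  by split=> [f g | r f]; rewrite ffunE.
apply: (chain_condition_sub IH _) => f [f0 fh0] x xl.
by case: (eqVneq x h) => [-> // | xh]; apply: f0; rewrite inE negb_or xh.
Qed.

Section ChainModules.
Variable R : pzRingType.
Implicit Type M : lmodType R.

Lemma noetherian_chain_condition M :
  noetherian_module M <-> chain_condition true (fun _ : M => True).
Proof. by split=> cc N sN; [move=> _; exact: cc | exact: cc N sN (fun _ _ _ => I)]. Qed.

Lemma artinian_chain_condition M :
  artinian_module M <-> chain_condition false (fun _ : M => True).
Proof. by split=> cc N sN; [move=> _; exact: cc | exact: cc N sN (fun _ _ _ => I)]. Qed.

Lemma noetherian_ffun (A : lmodType R) (H : finType) :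
  noetherian_module A -> noetherian_module {ffun H -> A}.
Proof.
by move=> /noetherian_chain_condition ccA; apply/noetherian_chain_condition/chain_condition_ffun.
Qed.

Lemma artinian_ffun (A : lmodType R) (H : finType) :
  artinian_module A -> artinian_module {ffun H -> A}.
Proof.
by move=> /artinian_chain_condition ccA; apply/artinian_chain_condition/chain_condition_ffun.
Qed.

End ChainModules.

Lemma iter_inj (T : Type) (f : T -> T) k : injective f -> injective (iter k f).
Proof. by move=> f_inj; elim: k => [|k IH] x y //= /f_inj /IH. Qed.

Lemma iter_surj (T : Type) (f : T -> T) k :
  (forall y, exists x, f x = y) -> forall y, exists x, iter k f x = y.
Proof.
move=> f_surj; elim: k => [|k IH] y; first by exists y.
by have [z <-] := IH y; have [x <-] := f_surj z; exists x; rewrite iterSr.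
Qed.

Definition dedekind_finite (R : pzRingType) (M : lmodType R) : Prop :=
  forall f g : M -> M, lmod_morphism f -> lmod_morphism g -> cancel f g -> cancel g f.

Section DedekindFinite.
Variables (R : pzRingType) (M : lmodType R).

(* The kernels of the iterates of [g] form an ascending chain. *)
Lemma noetherian_surj_inj (g : M -> M) :
  noetherian_module M -> lmod_morphism g -> (forall y, exists x, g x = y) -> injective g.
Proof.
move=> NM g_lin g_surj; apply: (lmod_morphism_inj g_lin) => x gx0.
pose N k x := iter k g x = 0.
have [k | k y | k0 st] := NM N.
- have [itD itZ] := lmod_morphism_iter k g_lin.
  split; first exact: lmod_morphism0 (lmod_morphism_iter k g_lin).
  by split=> [x1 x2 Nx1 Nx2 | r x1 Nx1]; rewrite /N ?itD ?itZ ?Nx1 ?Nx2 ?addr0 ?scaler0.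
- by rewrite /N /= => ->; apply: lmod_morphism0.
- have [y yx] := iter_surj k0 g_surj x.
  by rewrite -yx; apply/(st k0.+1 (leqnSn k0)); rewrite /N /= yx gx0.
Qed.

(* The images of the iterates of [f] form a descending chain. *)
Lemma artinian_inj_surj (f : M -> M) :
  artinian_module M -> lmod_morphism f -> injective f -> forall y, exists x, f x = y.
Proof.
move=> AM f_lin f_inj y.
pose N k x := exists z, x = iter k f z.
have [k | k x [z ->] | k0 st] := AM N.
- have [itD itZ] := lmod_morphism_iter k f_lin.
  split; first by exists 0; rewrite (lmod_morphism0 (lmod_morphism_iter k f_lin)).
  split=> [x1 x2 [z1 ->] [z2 ->] | r x1 [z1 ->]]; first by exists (z1 + z2).
  by exists (r *: z1).
- by exists (f z); rewrite iterSr.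
- have [z] : N k0.+1 (iter k0 f y) by apply/(st k0.+1 (leqnSn k0)); exists y.
  by rewrite iterSr => /(iter_inj f_inj) ->; exists z.
Qed.

Lemma noetherian_dedekind_finite : noetherian_module M -> dedekind_finite M.
Proof.
move=> NM f g _ g_lin gf x.
by apply: (noetherian_surj_inj NM g_lin) => [y | ]; [exists (f y) | rewrite gf].
Qed.

Lemma artinian_dedekind_finite : artinian_module M -> dedekind_finite M.
Proof.
move=> AM f g f_lin _ gf x.
by have [y <-] := artinian_inj_surj AM f_lin (can_inj gf) x; rewrite gf.
Qed.

End DedekindFinite.

Section FinitelySpanned.
Variable R : pzRingType.
Implicit Type M : lmodType R.

Definition finitely_spanned M : Prop :=
  exists (I : finType) (w : I -> M), forall x, exists c : I -> R, x = \sum_i c i *: w i.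

Lemma fin_gen_finitely_spanned M : fin_gen_module M -> finitely_spanned M.
Proof. by case=> s s_span; exists 'I_(size s), (fun i : 'I_(size s) => s`_i). Qed.

Lemma finitely_spanned_ord M : finitely_spanned M ->
  exists n (w : 'I_n -> M), forall x, exists c : 'I_n -> R, x = \sum_i c i *: w i.
Proof.
case=> I [w w_span]; exists #|I|, (w \o enum_val) => x.
have [c ->] := w_span x; exists (c \o enum_val).
rewrite (reindex (fun i : 'I_#|I| => enum_val i)) //.
by exists enum_rank => i _; rewrite ?enum_valK ?enum_rankK.
Qed.

Lemma finitely_spanned_ffun M (H : finType) :
  finitely_spanned M -> finitely_spanned {ffun H -> M}.
Proof.
case=> I [w w_span].
pose v (p : H * I) : {ffun H -> M} := [ffun x => if x == p.1 then w p.2 else 0].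
exists (H * I)%type, v => F.
have [c cE] := fin_all_exists (fun h => w_span (F h)).
exists (fun p => c p.1 p.2); apply/ffunP => y.
rewrite sum_ffunE -(pair_bigA _ (fun h i => (c h i *: v (h, i)) y)) /= (bigD1 y) //=.
rewrite [X in _ + X]big1 => [|h hy].
  by rewrite addr0 cE; apply: eq_bigr => i _; rewrite !ffunE eqxx.
by apply: big1 => i _; rewrite !ffunE eq_sym (negPf hy) scaler0.
Qed.

End FinitelySpanned.

Lemma horner_mx_coef (R : comNzRingType) n (B : 'M[R]_n.+1) p :
  horner_mx B p = \sum_(k < size p) p`_k *: B ^+ k.
Proof.
rewrite -{1}(coefK p) poly_def linear_sum; apply: eq_bigr => k _.
by rewrite linearZ /= rmorphXn /= horner_mx_X.
Qed.

Section Vasconcelos.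
Variables (R : pzRingType) (mulRC : commutative (@GRing.mul R)) (R_nz : (1 : R) != 0).

(* A copy of [R] carrying the commutative nontrivial ring structure that
   [char_poly] requires. *)
Definition Rc : Type := R.
HB.instance Definition _ := GRing.PzRing.on Rc.
HB.instance Definition _ := GRing.PzSemiRing_isNonZero.Build Rc R_nz.
HB.instance Definition _ := GRing.PzRing_hasCommutativeMul.Build Rc mulRC.

Variables (M : lmodType R) (n : nat).
Implicit Types (B C : 'M[Rc]_n.+1) (v : 'I_n.+1 -> M).

Definition mx_comb B v (i : 'I_n.+1) : M := \sum_j (B i j : R) *: v j.

Lemma mx_comb_mul B C v i : mx_comb (B *m C) v i = mx_comb B (mx_comb C v) i.
Proof.
rewrite /mx_comb; under eq_bigr do rewrite mxE scaler_suml.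
rewrite exchange_big /=; apply: eq_bigr => k _.
by rewrite scaler_sumr; apply: eq_bigr => j _; rewrite scalerA.
Qed.

Lemma mx_comb1 v i : mx_comb 1%:M v i = v i.
Proof.
rewrite /mx_comb (bigD1 i) //= big1 => [|j /negPf ji]; last by rewrite mxE eq_sym ji scale0r.
by rewrite mxE eqxx scale1r addr0.
Qed.

Lemma mx_comb_sum (I : Type) (r : seq I) (F : I -> 'M[Rc]_n.+1) v i :
  mx_comb (\sum_(k <- r) F k) v i = \sum_(k <- r) mx_comb (F k) v i.
Proof.
rewrite /mx_comb -exchange_big /=; apply: eq_bigr => j _.
by rewrite summxE scaler_suml.
Qed.

Lemma mx_comb0 v i : mx_comb 0 v i = 0.
Proof. by rewrite /mx_comb big1 // => j _; rewrite mxE scale0r. Qed.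

Lemma mx_combZ (c : Rc) B v i : mx_comb (c *: B) v i = (c : R) *: mx_comb B v i.
Proof. by rewrite /mx_comb scaler_sumr; apply: eq_bigr => j _; rewrite mxE scalerA. Qed.

Lemma eq_mx_comb B v v' i : v =1 v' -> mx_comb B v i = mx_comb B v' i.
Proof. by move=> vv'; apply: eq_bigr => j _; rewrite vv'. Qed.

Lemma lmod_morphism_mx_comb (g : M -> M) B v i :
  lmod_morphism g -> g (mx_comb B v i) = mx_comb B (g \o v) i.
Proof.
move=> g_lin; rewrite /mx_comb (lmod_morphism_sum g_lin).
by apply: eq_bigr => j _; rewrite g_lin.2.
Qed.

Variables (w : 'I_n.+1 -> M) (g : M -> M).
Hypotheses (w_span : forall x, exists c : 'I_n.+1 -> R, x = \sum_i c i *: w i)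
  (g_lin : lmod_morphism g) (g_surj : forall y, exists x, g x = y).

Lemma surj_mx_comb : exists B, forall i, w i = mx_comb B (g \o w) i.
Proof.
have w_row i : exists c : 'I_n.+1 -> R, w i = \sum_j c j *: g (w j).
  have [y <-] := g_surj (w i); have [c ->] := w_span y.
  by exists c; rewrite (lmod_morphism_sum g_lin); apply: eq_bigr => j _; rewrite g_lin.2.
have [B BE] := fin_all_exists w_row.
by exists (\matrix_(i, j) (B i j : Rc)) => i; rewrite BE; apply: eq_bigr => j _; rewrite mxE.
Qed.

Lemma mx_comb_iter B k :
  (forall i, w i = mx_comb B (g \o w) i) -> forall i, w i = mx_comb (B ^+ k) (iter k g \o w) i.
Proof.
move=> wB; elim: k => [|k IH] i; first by rewrite expr0 mx_comb1.
rewrite exprSr mx_comb_mul {1}IH; apply: eq_mx_comb => j /=.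
rewrite {1}(wB j) (lmod_morphism_mx_comb _ _ _ (lmod_morphism_iter k g_lin)).
by apply: eq_mx_comb => l; rewrite /comp iterSr.
Qed.

(* Cayley-Hamilton for a matrix [B] expressing [w] through [g w] yields a
   monic relation [p(g) = 0] whose constant term vanishes. *)
Lemma char_poly_annihilates B :
  (forall i, w i = mx_comb B (g \o w) i) ->
  forall x, \sum_(k < n.+2) ((char_poly B)`_k : R) *: iter (n.+1 - k) g x = 0.
Proof.
move=> wB; set p := char_poly B.
pose T x := \sum_(k < n.+2) (p`_k : R) *: iter (n.+1 - k) g x.
have T_lin : lmod_morphism T.
  split=> [x y | r x]; rewrite /T ?scaler_sumr -?big_split; apply: eq_bigr => k _.
    by rewrite (lmod_morphism_iter _ g_lin).1 scalerDr.
  by rewrite (lmod_morphism_iter _ g_lin).2 !scalerA mulRC.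
have Tw i : T (w i) = 0.
  have := congr1 (fun P => mx_comb P (iter n.+1 g \o w) i) (Cayley_Hamilton B).
  rewrite /= horner_mx_coef size_char_poly mx_comb_sum mx_comb0 => <-.
  apply: eq_bigr => k _; rewrite mx_combZ (mx_comb_iter k wB i).
  rewrite (lmod_morphism_mx_comb _ _ _ (lmod_morphism_iter _ g_lin)).
  by congr (_ *: _); apply: eq_mx_comb => j; rewrite /= -iterD subnK // -ltnS.
move=> x; change (T x = 0); have [c ->] := w_span x.
by rewrite (lmod_morphism_sum T_lin); apply: big1 => i _; rewrite T_lin.2 Tw scaler0.
Qed.

Lemma surj_inj_spanned : injective g.
Proof.
apply: (lmod_morphism_inj g_lin) => x gx0.
have [B wB] := surj_mx_comb; have := char_poly_annihilates wB x.
have lead1 : (char_poly B)`_n.+1 = 1.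
  by move: (char_poly_monic B); rewrite monicE lead_coefE size_char_poly => /eqP.
rewrite big_ord_recr big1 => [|k _].
  by rewrite subnn lead1 scale1r Monoid.mul1m.
rewrite (@subSn k n (ltn_ord k)) iterSr gx0.
by rewrite (lmod_morphism0 (lmod_morphism_iter _ g_lin)) scaler0.
Qed.

End Vasconcelos.

Lemma finitely_spanned_surj_inj (R : pzRingType) (M : lmodType R) (g : M -> M) :
  commutative (@GRing.mul R) -> finitely_spanned M -> lmod_morphism g ->
  (forall y, exists x, g x = y) -> injective g.
Proof.
move=> mulRC /finitely_spanned_ord [[|n] [w w_span]] g_lin g_surj x y.
  by have [c ->] := w_span x; have [d ->] := w_span y; rewrite !big_ord0.
have [R0 | R_nz] := eqVneq (1 : R) 0.
  by rewrite -[x]scale1r -[y]scale1r R0 !scale0r.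
exact: (surj_inj_spanned mulRC R_nz w_span g_lin g_surj).
Qed.

Lemma finitely_spanned_dedekind_finite (R : pzRingType) (M : lmodType R) :
  commutative (@GRing.mul R) -> finitely_spanned M -> dedekind_finite M.
Proof.
move=> mulRC MS f g _ g_lin gf x.
by apply: (finitely_spanned_surj_inj mulRC MS g_lin) => [y | ]; [exists (f y) | rewrite gf].
Qed.

Section CellularAutomata.
Variables (G : Grp) (R : pzRingType) (A : lmodType R).
Implicit Types (c : G -> A) (tau : (G -> A) -> G -> A).

Lemma is_CA_withE n (m : 'I_n -> G) mu tau :
  is_CA_with m mu tau -> forall c g, tau c g = mu [ffun i => c (gmul g (m i))].
Proof.
by case=> _ tauE c g; rewrite tauE; congr mu; apply/ffunP => i; rewrite !ffunE /gact ginvK.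
Qed.

Lemma is_CA_with_translate n (m : 'I_n -> G) mu tau c g :
  is_CA_with m mu tau -> tau (c \o gmul g) = tau c \o gmul g.
Proof.
move=> tauCA; apply: functional_extensionality => h /=.
by rewrite !(is_CA_withE tauCA); congr mu; apply/ffunP => i; rewrite !ffunE /= gmulA.
Qed.

Lemma is_CA_with_hom n (m : 'I_n -> G) mu tau :
  is_CA_with m mu tau -> Rmod_hom mu ->
  (forall c d, tau (c \+ d) = tau c \+ tau d) /\
  (forall (r : R) c, tau (r \*: c) = r \*: tau c).
Proof.
move=> tauCA [muD muZ]; split=> [c d | r c]; apply: functional_extensionality => g.
  rewrite /GRing.add_fun !(is_CA_withE tauCA) -muD.
  by congr mu; apply/ffunP => i; rewrite !ffunE.
rewrite /GRing.scale_fun !(is_CA_withE tauCA) -muZ.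
by congr mu; apply/ffunP => i; rewrite !ffunE.
Qed.

Lemma CA_Rmod_inverse tau tau_inv :
  CA_Rmod tau -> reversible tau -> cancel tau tau_inv -> CA_Rmod tau_inv.
Proof.
case=> n [m [mu [tauCA mu_lin]]] [tau' [tau'K [tauK' [n' [m' [mu' tau'CA]]]]]] tau_invK.
have -> : tau_inv = tau'.
  by apply: functional_extensionality => c; rewrite -[in LHS](tauK' c) tau_invK.
have [tauD tauZ] := is_CA_with_hom tauCA mu_lin.
have tau'D c d : tau' (c \+ d) = tau' c \+ tau' d.
  by rewrite -{1}(tauK' c) -{1}(tauK' d) -tauD tau'K.
have tau'Z (r : R) c : tau' (r \*: c) = r \*: tau' c.
  by rewrite -{1}(tauK' c) -tauZ tau'K.
have mu'E (x : {ffun 'I_n' -> A}) c :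
    (forall i, c (m' i) = x i) -> mu' x = tau' c (gone G).
  move=> cx; rewrite (is_CA_withE tau'CA); congr mu'.
  by apply/ffunP => i; rewrite ffunE gmul1l cx.
have ext (x : {ffun 'I_n' -> A}) : exists c, forall i, c (m' i) = x i.
  by apply: (factor_through 0) => i j /tau'CA.1 ->.
exists n', m', mu'; split => //; split=> [x y | r x].
  have [[cx cxE] [cy cyE]] := (ext x, ext y).
  rewrite (mu'E _ _ cxE) (mu'E _ _ cyE) (mu'E _ (cx \+ cy)) ?tau'D // => i.
  by rewrite /GRing.add_fun ffunE cxE cyE.
have [cx cxE] := ext x.
rewrite (mu'E _ _ cxE) (mu'E _ (r \*: cx)) ?tau'Z // => i.
by rewrite /GRing.scale_fun ffunE cxE.
Qed.

End CellularAutomata.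

Lemma In_map_enum (I : finType) (T : Type) (f : I -> T) i :
  List.In (f i) (map f (enum I)).
Proof.
have : i \in enum I by rewrite mem_enum.
by elim: (enum I) => //= j s IH; rewrite inE => /orP[/eqP <- | /IH]; [left | right].
Qed.

Lemma LEF_window (G : Grp) (I : finType) (y : I -> G) : LEF G ->
  exists (H : finGroupType) (phi : G -> H),
  [/\ phi (gone G) = 1%g,
      forall i j, phi (gmul (y i) (y j)) = (phi (y i) * phi (y j))%g &
      forall (U : Type) (c : G -> U), exists d : H -> U,
        d 1%g = c (gone G) /\
        forall i j, d (phi (gmul (y i) (y j))) = c (gmul (y i) (y j))].
Proof.
move=> lef.
pose z (u : option (I * I)) := if u is Some (i, j) then gmul (y i) (y j) else gone G.
pose S := map y (enum I) ++ map z (enum {: option (I * I)}).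
have S_y i : List.In (y i) S by apply: List.in_or_app; left; apply: In_map_enum.
have S_z u : List.In (z u) S by apply: List.in_or_app; right; apply: In_map_enum.
have [H [phi [phi_inj phiM]]] := lef S.
have phi1 : phi (gone G) = 1%g.
  have S11 : List.In (gmul (gone G) (gone G)) S by rewrite gmul1l; apply: (S_z None).
  have := phiM _ _ (S_z None) (S_z None) S11; rewrite /= gmul1l => e.
  by apply: (@mulgI _ (phi (gone G))); rewrite mulg1 -e.
exists H, phi; split => // [i j | U c].
  exact: phiM (S_y i) (S_y j) (S_z (Some (i, j))).
have [d dE] := factor_through (c (gone G)) (m := phi \o z) (x := c \o z)
  (fun u v e => congr1 c (phi_inj _ _ (S_z u) (S_z v) e)).
exists d; split => [| i j]; last exact: (dE (Some (i, j))).
by rewrite -phi1; exact: (dE None).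
Qed.

Section LocalModel.
Variables (G : Grp) (R : pzRingType) (A : lmodType R) (H : finGroupType) (phi : G -> H).

Definition model_CA n (m : 'I_n -> G) (mu : {ffun 'I_n -> A} -> A)
    (d : {ffun H -> A}) : {ffun H -> A} :=
  [ffun h => mu [ffun i => d (h * phi (m i))%g]].

Definition ffun_translate (h : H) (d : {ffun H -> A}) : {ffun H -> A} :=
  [ffun x => d (h * x)%g].

Lemma model_CA_linear n (m : 'I_n -> G) mu :
  Rmod_hom mu -> lmod_morphism (model_CA m mu).
Proof.
case=> muD muZ; split=> [d e | r d]; apply/ffunP => h; rewrite !ffunE.
  by rewrite -muD; congr mu; apply/ffunP => i; rewrite !ffunE.
by rewrite -muZ; congr mu; apply/ffunP => i; rewrite !ffunE.
Qed.

Lemma model_CA_translate n (m : 'I_n -> G) mu h d :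
  model_CA m mu (ffun_translate h d) = ffun_translate h (model_CA m mu d).
Proof.
by apply/ffunP => x; rewrite !ffunE; congr mu; apply/ffunP => i; rewrite !ffunE mulgA.
Qed.

Lemma model_CA_comp n1 (m1 : 'I_n1 -> G) mu1 n2 (m2 : 'I_n2 -> G) mu2 sigma tau
    (c : G -> A) (d : {ffun H -> A}) :
  is_CA_with m1 mu1 sigma -> is_CA_with m2 mu2 tau ->
  (forall i j, d (phi (m1 i) * phi (m2 j))%g = c (gmul (m1 i) (m2 j))) ->
  model_CA m1 mu1 (model_CA m2 mu2 d) 1%g = sigma (tau c) (gone G).
Proof.
move=> sCA tCA dc; rewrite ffunE (is_CA_withE sCA); congr mu1; apply/ffunP => i.
rewrite !ffunE gmul1l mul1g (is_CA_withE tCA); congr mu2; apply/ffunP => j.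
by rewrite !ffunE dc.
Qed.

End LocalModel.

Lemma CA_Rmod_cancel_sym (G : Grp) (R : pzRingType) (A : lmodType R)
    (sigma tau : (G -> A) -> G -> A) :
  LEF G -> (forall H : finGroupType, dedekind_finite {ffun H -> A}) ->
  CA_Rmod sigma -> CA_Rmod tau -> cancel tau sigma -> cancel sigma tau.
Proof.
move=> lef dfA [n1 [m1 [mu1 [sCA mu1_lin]]]] [n2 [m2 [mu2 [tCA mu2_lin]]]] tauK c.
pose y (k : 'I_n1 + 'I_n2) := match k with inl i => m1 i | inr j => m2 j end.
have [H [phi [phi1 phiM phi_factor]]] := LEF_window y lef.
pose sH := model_CA phi m1 mu1; pose tH := model_CA phi m2 mu2.
have tHK : cancel tH sH.
  move=> d; apply/ffunP => h.
  have -> : sH (tH d) h = ffun_translate h (sH (tH d)) 1%g.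
    by rewrite /ffun_translate [RHS]ffunE mulg1.
  rewrite -!model_CA_translate.
  rewrite (model_CA_comp (c := fun g => d (h * phi g)%g) sCA tCA) => [|i j].
    by rewrite tauK phi1 mulg1.
  by rewrite ffunE (phiM (inl i) (inr j)).
have sHK : cancel sH tH by apply: dfA tHK; apply: model_CA_linear.
apply: functional_extensionality => g.
have [d [d1 dE]] := phi_factor _ (c \o gmul g).
have -> : tau (sigma c) g = tau (sigma (c \o gmul g)) (gone G).
  by rewrite (is_CA_with_translate _ _ sCA) (is_CA_with_translate _ _ tCA) /= gmul1r.
rewrite -(model_CA_comp (phi := phi) (d := [ffun x => d x]) tCA sCA) => [|j i].
  by rewrite -/sH -/tH sHK ffunE d1 /= gmul1r.
by rewrite ffunE -(phiM (inr j) (inl i)); apply: (dE (inr j) (inl i)).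
Qed.

Theorem corollary7p1 (G : Grp) (R : pzRingType) (A : lmodType R)
    (sigma tau : (G -> A) -> (G -> A)) :
  LEF G -> CA_Rmod sigma -> CA_Rmod tau ->
  (* (1) *)
  (noetherian_module A -> reversible tau ->
     forall tau_inv, cancel tau tau_inv -> CA_Rmod tau_inv) /\
  (* (2) *)
  ((forall c, sigma (tau c) = c) ->
   (noetherian_module A \/ artinian_module A \/
    ((forall x y : R, (x * y = y * x)%R) /\ fin_gen_module A)) ->
   forall c, tau (sigma c) = c).
Proof.
move=> lef sCA tCA; split=> [_ | tauK hyp].
  by move=> tau_rev tau_inv; apply: CA_Rmod_inverse.
apply: (CA_Rmod_cancel_sym lef _ sCA tCA tauK) => H.
case: hyp => [NA | [AA | [mulRC /fin_gen_finitely_spanned AS]]].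
- exact/noetherian_dedekind_finite/noetherian_ffun.
- exact/artinian_dedekind_finite/artinian_ffun.
- exact/(finitely_spanned_dedekind_finite mulRC)/finitely_spanned_ffun.
Qed.
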